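(* Let $d,k\in\mathbb N^+$ and let $G=(V,E)$ be a graph. If $|V^G_{[1,d]}|>(d+1)(k-1)^2$, then $G$ has a $k$-edge induced subgraph.
   Context: All graphs are simple (finite, nonempty vertex set, undirected, no loops or multiple edges). $V^G_{[1,d]}:=\{v\in V: 1\le \deg(v)\le d\}$. A $k$-edge induced subgraph of $G$ is an induced subgraph $G[S]$ ($S\neq\emptyset$) with exactly $k$ edges. *)

From mathcomp Require Import all_boot.
Set Implicit Arguments. Unset Strict Implicit. Unset Printing Implicit Defensive.

Definition simple_graph (T : finType) (e : rel T) : Prop :=
  symmetric e /\ irreflexive e.

Definition deg (T : finType) (e : rel T) (x : T) : nat := #|[set y | e x y]|.

Definition V1d (T : finType) (e : rel T) (d : nat) : {set T} :=
  [set x | 1 <= deg e x <= d].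

Definition induced_edges (T : finType) (e : rel T) (S : {set T}) : {set {set T}} :=
  [set P : {set T} | (P \subset S) &&
     [exists x, exists y, e x y && (P == [set x; y])]].

Definition has_k_edge_induced (T : finType) (e : rel T) (k : nat) : Prop :=
  exists S : {set T}, S != set0 /\ #|induced_edges e S| = k.

(* Let I be a maximum stable subset of W := V1d e d. Every vertex of W outside I
   has a neighbour in I and every vertex of I has at most d neighbours, so
   |W| <= (d+1)|I| and hence |I| > (k-1)^2.  If some vertex has k neighbours in I,
   it spans a k-edge star with them.  Otherwise let C be a smallest set outside I
   dominating I; counting edges between C and I gives |I| <= (k-1)|C|, so
   |C| >= k.  By minimality each y in C has a private neighbour p y in I, whose
   only neighbour in C is y.  For Z \subset Y \subset C the induced subgraph on
   Y :|: p @: Z has exactly |Z| more edges than the one on Y, so edge counts of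
   induced subgraphs fill the whole interval [0, e(C) + |C|], which contains k. *)

From mathcomp Require Import all_boot zify.
Set Implicit Arguments. Unset Strict Implicit. Unset Printing Implicit Defensive.

Lemma leq_card_covering (T U : finType) (A : {set T}) (B : {set U}) (R : T -> U -> bool) m :
  (forall b, b \in B -> exists2 a, a \in A & R a b) ->
  (forall a, a \in A -> #|[set b in B | R a b]| <= m) ->
  #|B| <= #|A| * m.
Proof.
move=> covB degA; apply: (@leq_trans (\sum_(a in A) #|[set b in B | R a b]|)).
  rewrite -sum1_card (eq_bigr (fun a => \sum_(b in B) (R a b : nat))); last first.
    by move=> a _; rewrite -sum1dep_card big_mkcondr; apply: eq_bigr => b _; case: (R a b).
  rewrite exchange_big /=; apply: leq_sum => b Bb.
  by have [a Aa Rab] := covB b Bb; rewrite (bigD1 a) //= Rab leq_addr.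
by rewrite -sum_nat_const; apply: leq_sum.
Qed.

Lemma exists_subset_card (T : finType) (Y : {set T}) n :
  n <= #|Y| -> exists2 Z : {set T}, Z \subset Y & #|Z| = n.
Proof.
elim: n => [|n IHn] leY; first by exists set0; rewrite ?sub0set ?cards0.
have [Z sZY cardZ] := IHn (ltnW leY).
have /subsetPn [y Yy Zy] : ~~ (Y \subset Z).
  by apply/negP => /subset_leq_card; rewrite cardZ leqNgt leY.
by exists (y |: Z); rewrite ?subUset ?sub1set ?Yy ?sZY // cardsU1 Zy cardZ.
Qed.

Definition stable (T : finType) (e : rel T) (I : {set T}) : bool :=
  [forall x in I, forall y in I, ~~ e x y].

Definition dominates (T : finType) (e : rel T) (C I : {set T}) : bool :=
  [forall x in I, exists y in C, e x y].

Section InducedEdges.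

Variables (T : finType) (e : rel T).
Hypotheses (e_sym : symmetric e) (e_irr : irreflexive e).

Local Notation N x := [set u | e x u].

Lemma stableP (I : {set T}) : reflect {in I &, forall x y, ~~ e x y} (stable e I).
Proof.
apply: (iffP forall_inP) => [stI x y Ix Iy | stI x Ix].
  by move/forall_inP: (stI x Ix); apply.
by apply/forall_inP => y; apply: stI.
Qed.

Lemma dominatesP (C I : {set T}) :
  reflect (forall x, x \in I -> exists2 y, y \in C & e x y) (dominates e C I).
Proof. by apply: (iffP forall_inP) => domC x /domC /exists_inP. Qed.

Lemma induced_edges0 : induced_edges e set0 = set0.
Proof.
apply/setP => P; rewrite !inE subset0 andbC; case: existsP => // [[x /existsP [y]]].
by case/andP => _ /eqP -> ; apply/negbTE/set0Pn; exists x; rewrite !inE eqxx.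
Qed.

Lemma induced_edgesU1 (A : {set T}) v :
  induced_edges e (v |: A) = induced_edges e A :|: [set [set v; u] | u in A :&: N v].
Proof.
apply/setP => P; rewrite !inE; apply/idP/idP.
- case/andP => sP /existsP [x /existsP [y /andP [exy /eqP defP]]].
  have Px : x \in P by rewrite defP !inE eqxx.
  have Py : y \in P by rewrite defP !inE eqxx orbT.
  case Pv: (v \in P); last first.
    apply/orP; left; apply/andP; split.
      apply/subsetP => z Pz; move: (subsetP sP z Pz); rewrite !inE.
      by case: eqP Pz Pv => // -> ->.
    by apply/existsP; exists x; apply/existsP; exists y; rewrite exy defP eqxx.
  apply/orP; right; apply/imsetP.
  have: v \in [set x; y] by rewrite -defP.
  rewrite !inE => /orP [/eqP vx | /eqP vy].
    exists y; last by rewrite defP vx.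
    move: (subsetP sP y Py); rewrite -vx in exy; rewrite !inE exy andbT.
    by case: eqP => [yv|//]; move: exy; rewrite yv e_irr.
  exists x; last by rewrite defP vy setUC.
  move: (subsetP sP x Px); rewrite -vy in exy; rewrite !inE e_sym exy andbT.
  by case: eqP => [xv|//]; move: exy; rewrite xv e_irr.
- case/orP => [/andP [sP ->] | /imsetP [u]]; first by rewrite (subset_trans sP) ?subsetUr.
  rewrite !inE => /andP [Au evu] ->.
  apply/andP; split; last by apply/existsP; exists v; apply/existsP; exists u; rewrite evu eqxx.
  by apply/subsetP => z; rewrite !inE => /orP [->|/eqP ->]; rewrite ?eqxx ?Au ?orbT.
Qed.

Lemma card_induced_edgesU1 (A : {set T}) v : v \notin A ->
  #|induced_edges e (v |: A)| = #|induced_edges e A| + #|A :&: N v|.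
Proof.
move=> Av; rewrite induced_edgesU1 cardsU.
set F := [set _ | _ in _].
have -> : induced_edges e A :&: F = set0.
  apply/setP => P; rewrite !inE; apply/negbTE/andP => [[/andP [sP _] /imsetP [u _ defP]]].
  by move: (subsetP sP v); rewrite defP !inE eqxx (negbTE Av) => /(_ isT).
rewrite cards0 subn0 card_in_imset // => u1 u2; rewrite !inE => /andP [Au1 _] _ eqP12.
have: u1 \in [set v; u2] by rewrite -eqP12 !inE eqxx orbT.
by rewrite !inE => /orP [/eqP u1v|/eqP //]; move: Av; rewrite -u1v Au1.
Qed.

Lemma card_induced_edges_pendant (A L : {set T}) :
  [disjoint A & L] -> stable e L -> {in L, forall x, #|A :&: N x| = 1} ->
  #|induced_edges e (A :|: L)| = #|induced_edges e A| + #|L|.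
Proof.
move=> + /stableP; have [n] := ubnP #|L|; elim: n L => // n IHn L ltLn dAL stL uniqA.
have [->|[x Lx]] := set_0Vmem L; first by rewrite setU0 cards0 addn0.
have sLxL : L :\ x \subset L by apply: subsetDl.
have Lx' : x \notin L :\ x by rewrite !inE eqxx.
rewrite -(setD1K Lx) setUCA card_induced_edgesU1; last first.
  by rewrite !inE negb_or eqxx (disjointFl dAL Lx).
rewrite IHn; first last.
- by move=> y /(subsetP sLxL); apply: uniqA.
- by move=> y z /(subsetP sLxL) Ly /(subsetP sLxL); apply: stL.
- exact: disjointWr sLxL dAL.
- by rewrite (cardsD1 x L) Lx in ltLn.
have NxLx : (L :\ x) :&: N x = set0.
  apply/setP => y; rewrite !inE; apply/negbTE/andP => [[/andP [_ Ly] exy]].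
  by move: (stL x y Lx Ly); rewrite exy.
by rewrite setIUl NxLx setU0 uniqA // cardsU1 Lx' addnCA addnA addn1.
Qed.

Lemma stableU1 (I : {set T}) w :
  stable e I -> (forall x, x \in I -> ~~ e x w) -> stable e (w |: I).
Proof.
move=> /stableP stI nIw; apply/stableP => x y; rewrite !inE.
case/orP => [/eqP ->|Ix] /orP [/eqP ->|Iy]; rewrite ?e_irr //; last exact: stI.
  by rewrite e_sym nIw.
exact: nIw.
Qed.

Lemma maximum_stable_dominates (W I : {set T}) :
  I \subset W -> stable e I ->
  (forall J : {set T}, J \subset W -> stable e J -> #|J| <= #|I|) ->
  forall w, w \in W :\: I -> exists2 x, x \in I & e x w.
Proof.
move=> sIW stI maxI w; rewrite inE => /andP [Iw Ww].
have [/exists_inP [x Ix exw]|/exists_inP nIw] := boolP [exists x in I, e x w].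
  by exists x.
have : #|w |: I| <= #|I|.
  apply: maxI; first by rewrite subUset sub1set Ww sIW.
  by apply: stableU1 => // x Ix; apply/negP => exw; apply: nIw; exists x.
by rewrite cardsU1 Iw ltnn.
Qed.

Lemma exists_stable_V1d d : exists I : {set T},
  [/\ I \subset V1d e d, stable e I & #|V1d e d| <= d.+1 * #|I|].
Proof.
pose P (J : {set T}) := (J \subset V1d e d) && stable e J.
have P0 : P set0 by rewrite /P sub0set; apply/stableP => x; rewrite inE.
have [I /andP [sIW stI] maxI] := arg_maxnP (fun J : {set T} => #|J|) P0.
exists I; split => //.
have domW : forall w, w \in V1d e d :\: I -> exists2 x, x \in I & e x w.
  by apply: maximum_stable_dominates => // J sJ stJ; apply: maxI; rewrite /P sJ.
have degI x : x \in I -> #|[set w in V1d e d :\: I | e x w]| <= d.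
  move=> /(subsetP sIW); rewrite inE => /andP [_]; apply: leq_trans.
  by apply: subset_leq_card; apply/subsetP => u; rewrite !inE => /andP [_ ->].
rewrite -(cardsID I (V1d e d)) (setIidPr sIW) mulSn mulnC leq_add2l.
exact: leq_card_covering domW degI.
Qed.

Lemma stableS (I J : {set T}) : J \subset I -> stable e I -> stable e J.
Proof.
by move=> sJI /stableP stI; apply/stableP => x y /(subsetP sJI) Ix /(subsetP sJI); apply: stI.
Qed.

Lemma star_has_k_edge_induced (I : {set T}) y k :
  stable e I -> k <= #|I :&: N y| -> has_k_edge_induced e k.
Proof.
move=> stI /exists_subset_card [L sL cardL].
have NyL x : x \in L -> e y x by move/(subsetP sL); rewrite !inE => /andP [].
exists ([set y] :|: L); split; first by apply/set0Pn; exists y; rewrite !inE eqxx.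
rewrite card_induced_edges_pendant.
- by rewrite -(setU0 [set y]) card_induced_edgesU1 ?inE // induced_edges0 set0I !cards0.
- by rewrite disjoints1; apply/negP => /NyL; rewrite e_irr.
- by apply: stableS stI; apply: subset_trans sL (subsetIl _ _).
- move=> x /NyL eyx; rewrite (setIidPl _) ?cards1 //.
  by rewrite sub1set inE e_sym.
Qed.

Lemma dominates_private_neighbour (C I : {set T}) y :
  dominates e C I -> ~~ dominates e (C :\ y) I ->
  exists2 x, x \in I & C :&: N x = [set y].
Proof.
move=> /dominatesP domC; rewrite negb_forall_in => /exists_inP [x Ix].
rewrite negb_exists_in => /forall_inP nCx; exists x => //.
apply/eqP; rewrite eqEsubset; apply/andP; split.
  apply/subsetP => z; rewrite !inE => /andP [Cz exz]; apply/negPn/negP => zy.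
  by move: (nCx z); rewrite !inE zy Cz exz => /(_ isT).
have [z Cz exz] := domC x Ix; rewrite sub1set !inE.
case: (eqVneq z y) => [<-|zy]; first by rewrite Cz.
by move: (nCx z); rewrite !inE zy Cz exz => /(_ isT).
Qed.

Lemma exists_private_dominator (I : {set T}) :
  stable e I -> {in I, forall x, exists y, e x y} ->
  exists C : {set T}, exists p : T -> T,
    [/\ [disjoint C & I], dominates e C I &
        {in C, forall y, p y \in I /\ C :&: N (p y) = [set y]}].
Proof.
move=> /stableP stI hasN.
pose P (J : {set T}) := (J \subset ~: I) && dominates e J I.
have PnI : P (~: I).
  rewrite /P subxx; apply/dominatesP => x Ix; have [u exu] := hasN x Ix.
  exists u => //; rewrite inE; apply/negP => Iu.
  by move: (stI x u Ix Iu); rewrite exu.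
have [C /andP [sCnI domC] minC] := arg_minnP (fun J : {set T} => #|J|) PnI.
have private y : y \in C -> exists2 x, x \in I & C :&: N x = [set y].
  move=> Cy; apply: dominates_private_neighbour => //; apply/negP => domCy.
  have /minC : P (C :\ y) by rewrite /P domCy (subset_trans (subsetDl _ _) sCnI).
  by rewrite (cardsD1 y C) Cy ltnn.
exists C, (fun y => odflt y [pick x in I | C :&: N x == [set y]]).
split => //; first by rewrite disjoints_subset.
move=> y Cy; case: pickP => [x /andP [Ix /eqP //]|noPx].
have [x Ix NxC] := private y Cy.
by move: (noPx x); rewrite Ix NxC eqxx.
Qed.

Section PrivateNeighbours.

Variables (C I : {set T}) (p : T -> T).
Hypotheses (dCI : [disjoint C & I]) (stI : stable e I)
  (pP : {in C, forall y, p y \in I /\ C :&: N (p y) = [set y]}).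

Lemma card_induced_edges_private (Y Z : {set T}) :
  Z \subset Y -> Y \subset C ->
  #|induced_edges e (Y :|: p @: Z)| = #|induced_edges e Y| + #|Z|.
Proof.
move=> sZY sYC; have sZC := subset_trans sZY sYC.
have pZI z : z \in Z -> p z \in I by move/(subsetP sZC)/pP => [].
rewrite card_induced_edges_pendant.
- congr (_ + _); rewrite card_in_imset // => z1 z2 Zz1 Zz2 pz12.
  have [_ NC1] := pP (subsetP sZC z1 Zz1); have [_ NC2] := pP (subsetP sZC z2 Zz2).
  by apply/set1_inj; rewrite -NC1 -NC2 pz12.
- rewrite disjoint_subset; apply/subsetP => x Yx; rewrite !inE.
  apply/imsetP => -[z Zz defx]; move: (pZI z Zz).
  by rewrite -defx (disjointFr dCI (subsetP sYC x Yx)).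
- apply: stableS stI; apply/subsetP => _ /imsetP [z Zz ->]; exact: pZI.
- move=> _ /imsetP [z Zz ->]; have [_ NC] := pP (subsetP sZC z Zz).
  rewrite -(setIidPl sYC) -setIA NC (setIidPr _) ?cards1 //.
  by rewrite sub1set (subsetP sZY).
Qed.

Lemma induced_edges_interval (Y : {set T}) n :
  Y \subset C -> n <= #|induced_edges e Y| + #|Y| ->
  exists S, #|induced_edges e S| = n.
Proof.
have [m] := ubnP #|Y|; elim: m Y => // m IHm Y ltYm sYC leYn.
have [Y0|[y Yy]] := set_0Vmem Y.
  by exists set0; move: leYn; rewrite Y0 induced_edges0 !cards0 leqn0 => /eqP ->.
have sY'C : Y :\ y \subset C by apply: subset_trans sYC; apply: subsetDl.
have Y'y : y \notin Y :\ y by rewrite !inE eqxx.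
have cardY : #|Y| = #|Y :\ y|.+1 by rewrite (cardsD1 y Y) Yy.
have [leY'n|ltY'n] := leqP n (#|induced_edges e (Y :\ y)| + #|Y :\ y|).
  by apply: (IHm (Y :\ y)) => //; rewrite -ltnS -cardY.
have leYY' : #|induced_edges e Y| <= #|induced_edges e (Y :\ y)| + #|Y :\ y|.
  rewrite -{1}(setD1K Yy) card_induced_edgesU1 // leq_add2l.
  exact/subset_leq_card/subsetIl.
have leZY : n - #|induced_edges e Y| <= #|Y| by rewrite leq_subLR.
have [Z sZY cardZ] := exists_subset_card leZY.
exists (Y :|: p @: Z); rewrite card_induced_edges_private // cardZ subnKC //.
exact: leq_trans leYY' (ltnW ltY'n).
Qed.

End PrivateNeighbours.

End InducedEdges.

Theorem lemma3p12 (T : finType) (e : rel T) (d k : nat) :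
  simple_graph e -> 0 < d -> 0 < k ->
  (d.+1 * (k.-1) ^ 2 < #|V1d e d|)%N ->
  has_k_edge_induced e k.
Proof.
move=> [e_sym e_irr] _ k_gt0 ltVd.
have [I [sIV stI leVI]] := exists_stable_V1d e_sym e_irr d.
have ltkI : k.-1 ^ 2 < #|I|.
  by rewrite -(ltn_pmul2l (ltn0Sn d)) (leq_trans ltVd leVI).
have [/existsP [y leIy] | /existsPn fewI] := boolP [exists y, k <= #|I :&: [set u | e y u]|].
  exact: (star_has_k_edge_induced e_sym e_irr stI leIy).
have hasN : {in I, forall x, exists y, e x y}.
  move=> x /(subsetP sIV); rewrite inE => /andP [/card_gt0P [y]]; rewrite inE.
  by exists y.
have [C [p [dCI /dominatesP domC pP]]] := exists_private_dominator stI hasN.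
have leIC : #|I| <= #|C| * k.-1.
  apply: (@leq_card_covering _ _ C I (fun y x => e y x)).
    by move=> x Ix; have [y Cy exy] := domC x Ix; exists y; rewrite // e_sym.
  move=> y _; rewrite -ltnS prednK // ltnNge; apply: contra (fewI y) => /leq_trans; apply.
  by apply/subset_leq_card/subsetP => x; rewrite !inE.
have lekC : k <= #|C| by rewrite leqNgt; apply/negP => ltCk; nia.
have [S ES] := induced_edges_interval e_sym e_irr dCI stI pP (subxx C)
  (leq_trans lekC (leq_addl _ _)).
exists S; split => //; apply: contraTneq k_gt0 => S0.
by rewrite -ES S0 induced_edges0 cards0.
Qed.
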